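(* Let $\mathcal{T}$ be an MPQ-tree of an interval graph $G=(V,E)$, let $(x,y)\in E$ with $x$ over $y$ and $node(x)\neq node(y)$. If $node(y)$ is a P-node that is not a leaf of $\mathcal{T}$, then $(x,y)$ is not an interval edge.
   Context: Graphs are finite and simple; for $G=(V,E)$ and $e\in E$, $G-e=(V,E\setminus\{e\})$. An edge $(x,y)\in E$ of an interval graph $G$ is an interval edge if $G-(x,y)$ is an interval graph. An MPQ-tree of an interval graph $G=(V,E)$, $V=\{1,\dots,n\}$, is a rooted plane tree whose nodes are P-nodes and Q-nodes. Each P-node carries a (possibly empty) set of vertices. A Q-node has $k\ge 3$ ordered positions $1,\dots,k$; position $i$ carries a set $S_i\subseteq V$ (the $i$-th section) and a child subtree $T_i$, which may be empty. Every vertex $v$ is assigned to exactly one node $node(v)$: either $v$ lies in the set of the P-node $node(v)$, or $node(v)$ is a Q-node and $v$ lies exactly in the sections $S_{l(v)},\dots,S_{r(v)}$ of it, with $l(v)<r(v)$. For a node with child subtrees $T_1,\dots,T_k$, $V_i$ denotes the set of vertices assigned to nodes of $T_i$ ($V_i=\emptyset$ if $T_i$ is empty). The maximal cliques of $G$ are in bijection with the descending paths from the root which at a P-node continue into one of its children (stopping if there is none) and at a Q-node choose a position $i$ and continue into $T_i$ (stopping if $T_i$ is empty); the clique is the union of the sets of the visited P-nodes and the chosen sections. Reading these cliques left to right gives a linear order of the maximal cliques, and the orders obtained this way after arbitrarily permuting children of P-nodes and reversing the positions of Q-nodes are exactly the orders of the maximal cliques of $G$ in which the cliques containing any fixed vertex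 are consecutive. Moreover, for every Q-node with sections $S_1,\dots,S_k$: (a) $V_1\neq\emptyset$ and $V_k\ne\emptyset$; (b) $S_1\subseteq S_2$ and $S_k\subseteq S_{k-1}$; (c) $S_{i-1}\cap S_i\neq\emptyset$ for $2\le i\le k$; (d) $S_{i-1}\neq S_i$ for $2\le i\le k$; (e) $(S_i\cap S_{i+1})\setminus S_1\neq\emptyset$ and $(S_{i-1}\cap S_i)\setminus S_k\neq\emptyset$ for $2\le i\le k-1$; (f) $(S_{i-1}\cup V_{i-1})\setminus S_i\neq\emptyset$ and $(S_i\cup V_i)\setminus S_{i-1}\neq\emptyset$ for $2\le i\le k$; and further (g) no empty P-node has an empty P-node as its parent, (h) no P-node has exactly one child whose root is a P-node, (i) every child subtree of a P-node is nonempty. We say $x$ is over $y$ if $node(x)$ is the lowest common ancestor of $node(x)$ and $node(y)$ in $\mathcal{T}$. *)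

From Stdlib Require Import Permutation.
From mathcomp Require Import all_boot.
Set Implicit Arguments. Unset Strict Implicit. Unset Printing Implicit Defensive.

(** * Graphs: a finite simple graph is a symmetric irreflexive relation e on a finType. *)

Definition remove_edge (T : finType) (e : rel T) (x y : T) : rel T :=
  fun u v => e u v && ~~ (((u == x) && (v == y)) || ((u == y) && (v == x))).

Definition interval_graph (T : finType) (e : rel T) : Prop :=
  exists I : T -> nat * nat,
    (forall v, (I v).1 <= (I v).2) /\
    (forall u v, u != v -> e u v = ((I u).1 <= (I v).2) && ((I v).1 <= (I u).2)).

Definition is_clique (T : finType) (e : rel T) (K : {set T}) : bool :=
  [forall u in K, forall v in K, (u != v) ==> e u v].

Definition maximal_clique (T : finType) (e : rel T) (K : {set T}) : Prop :=
  is_clique e K /\ (forall K', is_clique e K' -> K \subset K' -> K' = K).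

(** PN S ch : a P-node carrying the set S with children ch (each child subtree nonempty).
    QN secs : a Q-node; position i (0-based) carries section (secs_i).1 and an
              optional (possibly empty) child subtree (secs_i).2. *)
Inductive mpq (T : finType) : Type :=
| PN : {set T} -> seq (mpq T) -> mpq T
| QN : seq ({set T} * option (mpq T)) -> mpq T.

Section MPQ.
Variable T : finType.
Implicit Types (t : mpq T) (e : rel T).

Fixpoint verts t : {set T} :=
  match t with
  | PN A ch => A :|: (fix F (l : seq (mpq T)) := match l with
                       | [::] => set0 | c :: l' => verts c :|: F l' end) ch
  | QN secs => (fix F (l : seq ({set T} * option (mpq T))) := match l with
                 | [::] => set0
                 | (A, o) :: l' =>
                     A :|: (match o with None => set0 | Some c => verts c end) :|: F l'
                 end) secs
  end.

Fixpoint cliques t : seq {set T} :=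
  match t with
  | PN A ch =>
      match ch with
      | [::] => [:: A]
      | _ => (fix F (l : seq (mpq T)) := match l with
               | [::] => [::]
               | c :: l' => map (fun K => A :|: K) (cliques c) ++ F l' end) ch
      end
  | QN secs => (fix F (l : seq ({set T} * option (mpq T))) := match l with
                 | [::] => [::]
                 | (A, None) :: l' => A :: F l'
                 | (A, Some c) :: l' => map (fun K => A :|: K) (cliques c) ++ F l'
                 end) secs
  end.

(** Node addresses: sequence of child indices from the root
    (for a Q-node, index = position). *)
Fixpoint subtree t (a : seq nat) {struct a} : option (mpq T) :=
  match a with
  | [::] => Some t
  | i :: a' =>
      match t with
      | PN _ ch => match onth ch i with Some c => subtree c a' | None => None end
      | QN secs => match onth secs i with
                   | Some (_, Some c) => subtree c a'
                   | _ => None end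
      end
  end.

Definition at_node t (a : seq nat) (v : T) : Prop :=
  match subtree t a with
  | Some (PN A _) => v \in A
  | Some (QN secs) => has (fun p : {set T} * option (mpq T) => v \in p.1) secs
  | None => False
  end.

Definition isP t : bool := if t is PN _ _ then true else false.
Definition isEmptyP t : bool := if t is PN A _ then A == set0 else false.

(** Local conditions (g), (h) at a P-node; (i) holds by construction. *)
Definition P_ok (A : {set T}) (ch : seq (mpq T)) : Prop :=
  (A == set0 -> all (fun c => ~~ isEmptyP c) ch) /\
  ~ (size ch = 1 /\ all isP ch).

Definition sec (secs : seq ({set T} * option (mpq T))) (i : nat) : {set T} :=
  nth set0 (map fst secs) i.
Definition subV (secs : seq ({set T} * option (mpq T))) (i : nat) : {set T} :=
  match nth None (map snd secs) i with Some c => verts c | None => set0 end.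

(** Local conditions at a Q-node with positions 0..k-1 (paper: 1..k), (a)-(f). *)
Definition Q_ok (secs : seq ({set T} * option (mpq T))) : Prop :=
  let k := size secs in
  let A := sec secs in let V := subV secs in
  [/\ 3 <= k,
      (V 0 != set0 /\ V k.-1 != set0) /\
      (A 0 \subset A 1 /\ A k.-1 \subset A k.-2),
      (forall i, 1 <= i < k -> A i.-1 :&: A i != set0) /\
      (forall i, 1 <= i < k -> A i.-1 != A i),
      (forall i, 1 <= i < k.-1 ->
                   ((A i :&: A i.+1) :\: A 0 != set0) /\
                   ((A i.-1 :&: A i) :\: A k.-1 != set0)) &
      (forall i, 1 <= i < k ->
                   ((A i.-1 :|: V i.-1) :\: A i != set0) /\
                   ((A i :|: V i) :\: A i.-1 != set0))].

Fixpoint mpq_wf t : Prop :=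
  match t with
  | PN A ch => P_ok A ch /\
      (fix F (l : seq (mpq T)) := match l with
        | [::] => True | c :: l' => mpq_wf c /\ F l' end) ch
  | QN secs => Q_ok secs /\
      (fix F (l : seq ({set T} * option (mpq T))) := match l with
        | [::] => True
        | (_, None) :: l' => F l'
        | (_, Some c) :: l' => mpq_wf c /\ F l' end) secs
  end.

(** teq t t' : t' is obtained from t by permuting children of P-nodes and
    reversing the positions of Q-nodes (arbitrarily, at every node). *)
Fixpoint teq t (t' : mpq T) {struct t} : Prop :=
  match t, t' with
  | PN A ch, PN A' ch' =>
      A = A' /\ exists ch1, Permutation ch1 ch' /\
        (fix F (l l1 : seq (mpq T)) := match l, l1 with
          | [::], [::] => True
          | c :: l', c1 :: l1' => teq c c1 /\ F l' l1'
          | _, _ => False end) ch ch1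
  | QN q, QN q' =>
      exists q1, (q' = q1 \/ q' = rev q1) /\
        (fix F (l l1 : seq ({set T} * option (mpq T))) := match l, l1 with
          | [::], [::] => True
          | (A, o) :: l', (A1, o1) :: l1' =>
              [/\ A = A1,
                  match o, o1 with
                  | None, None => True
                  | Some c, Some c1 => teq c c1
                  | _, _ => False end
                & F l' l1']
          | _, _ => False end) q q1
  | _, _ => False
  end.

Definition consecutive_clique_order e (s : seq {set T}) : Prop :=
  [/\ uniq s, (forall K, K \in s <-> maximal_clique e K) &
      (forall v i j k, i <= j <= k -> k < size s ->
         v \in nth set0 s i -> v \in nth set0 s k -> v \in nth set0 s j)].

Definition mpq_tree_of e t : Prop :=
  [/\ mpq_wf t,
      (forall v, exists! a, at_node t a v),
      (forall a secs v, subtree t a = Some (QN secs) -> at_node t a v ->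
         exists l r, l < r < size secs /\
           (forall i, i < size secs -> (v \in sec secs i) = (l <= i <= r))),
      (* maximal cliques are in bijection with descending paths *)
      uniq (cliques t) /\ (forall K, K \in cliques t <-> maximal_clique e K) &
      (forall s, (exists t', teq t t' /\ s = cliques t') <-> consecutive_clique_order e s)].

End MPQ.

(* Distinct paths have distinct maximal cliques, so
   each has a private vertex.  From this we find, at or below node(y), a node c
   with two branches i <> j carrying vertices u and w assigned below them: c is
   node(y) itself if it has two children, and otherwise its only child, which
   is a Q-node by (h), whose first and last positions work by (b).  No clique
   reaches into two branches, so u and w are not adjacent; x and y lie in every
   clique through c (y as a P-node vertex above c, x as a vertex above node(y)
   sharing a clique with y).  Hence x - u - y - w - x is an induced 4-cycle of
   G - xy, which an interval graph cannot contain. *)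
From mathcomp Require Import all_boot zify.
Set Implicit Arguments. Unset Strict Implicit. Unset Printing Implicit Defensive.

Lemma uniq_map_inj (U V : eqType) (f : U -> V) s a b :
  uniq (map f s) -> a \in s -> b \in s -> f a = f b -> a = b.
Proof.
elim: s => [//|z s IH] /= /andP[fz us]; rewrite !inE => /orP[/eqP->|ha] /orP[/eqP->|hb] //.
- by move=> E; move: fz; rewrite E map_f.
- by move=> E; move: fz; rewrite -E map_f.
- exact: IH.
Qed.

Lemma prefix_rcons_eq (c s : seq nat) i j :
  prefix (rcons c i) s -> prefix (rcons c j) s -> i = j.
Proof.
rewrite !prefixE !size_rcons => /eqP E1 /eqP E2.
by have := f_equal (last 0) (etrans (esym E1) E2); rewrite !last_rcons.
Qed.

Lemma branch_paths_neq (c : seq nat) i j q q' : i != j -> c ++ i :: q != c ++ j :: q'.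
Proof.
apply: contraNneq => /(f_equal (fun s => nth 0 s (size c))).
by rewrite !nth_cat ltnn subnn /= => ->.
Qed.

Section Paths.
Variable T : finType.
Implicit Types (t s : mpq T) (A B : {set T}) (v : T) (a b p q : seq nat).

Definition children_hold (P : mpq T -> Prop) (ch : seq (mpq T)) : Prop :=
  foldr (fun s Q => P s /\ Q) True ch.
Definition positions_hold (P : mpq T -> Prop)
    (secs : seq ({set T} * option (mpq T))) : Prop :=
  foldr (fun pos Q => (if pos.2 is Some s then P s else True) /\ Q) True secs.

Definition mpq_nested_ind (P : mpq T -> Prop)
    (HP : forall A ch, children_hold P ch -> P (PN A ch))
    (HQ : forall secs, positions_hold P secs -> P (QN secs)) : forall t, P t :=
  fix F t := match t with
  | PN A ch => HP A ch ((fix G ch : children_hold P ch :=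
      match ch return children_hold P ch with
      | [::] => I
      | s :: ch' => conj (F s) (G ch')
      end) ch)
  | QN secs => HQ secs ((fix G secs : positions_hold P secs :=
      match secs return positions_hold P secs with
      | [::] => I
      | (_, Some s) :: secs' => conj (F s) (G secs')
      | (_, None) :: secs' => conj I (G secs')
      end) secs)
  end.

Fixpoint pclique t p {struct p} : {set T} :=
  match t, p with
  | PN A _, [::] => A
  | PN A ch, i :: p' =>
      A :|: (if onth ch i is Some s then pclique s p' else set0)
  | QN _, [::] => set0
  | QN secs, i :: p' =>
      match onth secs i with
      | Some (B, Some s) => B :|: pclique s p'
      | Some (B, None) => B
      | None => set0
      end
  end.

Fixpoint paths t : seq (seq nat) :=
  match t with
  | PN _ ch =>
      if ch is [::] then [:: [::]] else
      (fix F (ch : seq (mpq T)) (i : nat) := match ch with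
        | [::] => [::]
        | s :: ch' => map (cons i) (paths s) ++ F ch' i.+1 end) ch 0
  | QN secs =>
      (fix F (secs : seq ({set T} * option (mpq T))) (i : nat) := match secs with
        | [::] => [::]
        | (_, None) :: secs' => [:: i] :: F secs' i.+1
        | (_, Some s) :: secs' => map (cons i) (paths s) ++ F secs' i.+1 end) secs 0
  end.

(** The inner recursions of [cliques] and [paths], named so that they can be
    reasoned about by induction on the list of children. *)
Definition cliques_children A : seq (mpq T) -> seq {set T} :=
  fix F ch := match ch with
  | [::] => [::]
  | s :: ch' => map (fun K => A :|: K) (cliques s) ++ F ch' end.
Definition cliques_positions : seq ({set T} * option (mpq T)) -> seq {set T} :=
  fix F secs := match secs with
  | [::] => [::]
  | (B, None) :: secs' => B :: F secs'
  | (B, Some s) :: secs' => map (fun K => B :|: K) (cliques s) ++ F secs' end.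
Definition paths_children : seq (mpq T) -> nat -> seq (seq nat) :=
  fix F ch i := match ch with
  | [::] => [::]
  | s :: ch' => map (cons i) (paths s) ++ F ch' i.+1 end.
Definition paths_positions : seq ({set T} * option (mpq T)) -> nat -> seq (seq nat) :=
  fix F secs i := match secs with
  | [::] => [::]
  | (_, None) :: secs' => [:: i] :: F secs' i.+1
  | (_, Some s) :: secs' => map (cons i) (paths s) ++ F secs' i.+1 end.

Lemma cliquesPE A s ch : cliques (PN A (s :: ch)) = cliques_children A (s :: ch).
Proof. by []. Qed.
Lemma cliquesQE secs : cliques (QN secs) = cliques_positions secs.
Proof. by []. Qed.
Lemma pathsPE A s ch : paths (PN A (s :: ch)) = paths_children (s :: ch) 0.
Proof. by []. Qed.
Lemma pathsQE secs : paths (QN secs) = paths_positions secs 0.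
Proof. by []. Qed.

Lemma onth_cat_size (U : Type) (pre l : seq U) x :
  onth (pre ++ x :: l) (size pre) = Some x.
Proof. by elim: pre. Qed.

Lemma cliques_paths t : cliques t = map (pclique t) (paths t).
Proof.
elim/mpq_nested_ind: t => [A ch IH|secs IH].
  case: ch IH => [//|s ch] IH; rewrite cliquesPE pathsPE.
  suff /(_ [::]) : forall pre, cliques_children A (s :: ch) =
      map (pclique (PN A (pre ++ s :: ch))) (paths_children (s :: ch) (size pre)).
    by [].
  elim: (s :: ch) IH => [//|s0 ch0 IHch] [IHs0 IH] pre /=.
  rewrite map_cat -map_comp IHs0 -map_comp (IHch IH (rcons pre s0)).
  rewrite cat_rcons size_rcons; congr (_ ++ _).
  by apply: eq_map => q /=; rewrite onth_cat_size.
rewrite cliquesQE pathsQE.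
suff /(_ [::]) : forall pre, cliques_positions secs =
    map (pclique (QN (pre ++ secs))) (paths_positions secs (size pre)).
  by [].
elim: secs IH => [//|[B [s|]] secs IHsecs] [IHs IH] pre /=.
  rewrite map_cat -map_comp IHs -map_comp (IHsecs IH (rcons pre (B, Some s))).
  rewrite cat_rcons size_rcons; congr (_ ++ _).
  by apply: eq_map => q /=; rewrite onth_cat_size.
rewrite onth_cat_size (IHsecs IH (rcons pre (B, None))).
by rewrite cat_rcons size_rcons.
Qed.

Lemma subtree_cat t a b :
  subtree t (a ++ b) = if subtree t a is Some s then subtree s b else None.
Proof.
elim: a t => [//|i a IH] [A ch|secs] /=.
  by case: (onth ch i) => [s|] //; rewrite IH.
by case: (onth secs i) => [[B [s|]]|] //; rewrite IH.
Qed.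

Lemma paths_children_mem ch i j s q :
  onth ch j = Some s -> q \in paths s -> (i + j) :: q \in paths_children ch i.
Proof.
elim: ch i j => [|s0 ch IH] i [|j] //=.
  by case=> ->; rewrite addn0 mem_cat => hq; rewrite map_f.
by move=> /IH h /h; rewrite mem_cat addnS -addSn => ->; rewrite orbT.
Qed.

Lemma paths_positions_mem secs i j B s q :
  onth secs j = Some (B, Some s) -> q \in paths s ->
  (i + j) :: q \in paths_positions secs i.
Proof.
elim: secs i j => [|[B0 [s0|]] secs IH] i [|j] //=.
- by case=> _ ->; rewrite addn0 mem_cat => hq; rewrite map_f.
- by move=> /IH h /h; rewrite mem_cat addnS -addSn => ->; rewrite orbT.
- by move=> /IH h /h; rewrite inE addnS -addSn => ->; rewrite orbT.
Qed.

Lemma paths_positions_leaf secs i j B :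
  onth secs j = Some (B, None) -> [:: i + j] \in paths_positions secs i.
Proof.
elim: secs i j => [|[B0 [s0|]] secs IH] i [|j] //=.
- by move=> /IH h; rewrite mem_cat addnS -addSn h orbT.
- by rewrite addn0 inE eqxx.
- by move=> /IH h; rewrite inE addnS -addSn h orbT.
Qed.

Lemma paths_subtree t a s q :
  subtree t a = Some s -> q \in paths s -> a ++ q \in paths t.
Proof.
elim: a t => [|i a IH] t; first by case=> ->.
case: t => [A ch|secs]; rewrite [subtree _ _]/=.
  case E: (onth ch i) => [s'|] // /IH h /h hq.
  case: ch E => [|s0 ch] E; first by case: i E.
  by rewrite pathsPE; have := paths_children_mem 0 E hq.
case E: (onth secs i) => [[B [s'|]]|] // /IH h /h hq.
by rewrite pathsQE; have := paths_positions_mem 0 E hq.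
Qed.

Definition wf_children : seq (mpq T) -> Prop :=
  fix F ch := match ch with [::] => True | s :: ch' => mpq_wf s /\ F ch' end.
Definition wf_positions : seq ({set T} * option (mpq T)) -> Prop :=
  fix F secs := match secs with
  | [::] => True
  | (_, None) :: secs' => F secs'
  | (_, Some s) :: secs' => mpq_wf s /\ F secs' end.

Lemma wfPE A ch : mpq_wf (PN A ch) = (P_ok A ch /\ wf_children ch).
Proof. by []. Qed.
Lemma wfQE secs : mpq_wf (QN secs) = (Q_ok secs /\ wf_positions secs).
Proof. by []. Qed.

Lemma wf_subtree t a s : mpq_wf t -> subtree t a = Some s -> mpq_wf s.
Proof.
elim: a t => [|i a IH] t /=; first by move=> wt [<-].
case: t => [A ch|secs].
  rewrite wfPE => -[_]; case E: (onth ch i) => [s'|] // wch; apply: IH.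
  by elim: ch i wch E => [|s0 ch IHch] [|i] //= [ws0 wch]; [case=> <- | apply: IHch].
rewrite wfQE => -[_]; case E: (onth secs i) => [[B [s'|]]|] // wsecs; apply: IH.
elim: secs i wsecs E => [|[B0 [s0|]] secs IHs] [|i] //=; first by case=> ws0 _ [_ <-].
  by case=> _; apply: IHs.
exact: IHs.
Qed.

(** A well-formed tree has at least one path (Q-nodes have positions). *)
Lemma paths_nonempty t : mpq_wf t -> exists q, q \in paths t.
Proof.
elim/mpq_nested_ind: t => [A [|s ch] IH|secs IH].
- by exists [::]; rewrite inE.
- rewrite wfPE => -[_ [ws _]]; have [q hq] := IH.1 ws.
  by exists (0 :: q); rewrite pathsPE /= mem_cat map_f.
rewrite wfQE pathsQE => -[[k3 _ _ _ _] wsecs].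
case: secs k3 wsecs IH => [//|[B [s|]] secs] _ /=.
  move=> [ws _] [IHs _]; have [q hq] := IHs ws.
  by exists (0 :: q); rewrite mem_cat map_f.
by exists [:: 0]; rewrite inE eqxx.
Qed.

Definition arity s : nat :=
  match s with PN _ ch => size ch | QN secs => size secs end.

Lemma onth_lt (U : Type) (l : seq U) j : j < size l -> exists x, onth l j = Some x.
Proof. by rewrite -onthTE; case: (onth l j) => // x _; exists x. Qed.

Lemma path_through_child t a s j : mpq_wf t -> subtree t a = Some s ->
  j < arity s -> exists q, a ++ j :: q \in paths t.
Proof.
move=> wt ha.
have via_child s' : subtree t (a ++ [:: j]) = Some s' -> exists q, a ++ j :: q \in paths t.
  move=> hs'; have [q hq] := paths_nonempty (wf_subtree wt hs').
  by exists q; rewrite -cat1s catA; apply: paths_subtree hs' hq.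
case: s ha => [A ch|secs] ha /onth_lt [r E].
  by apply: (via_child r); rewrite subtree_cat ha /= E.
case: r E => B [s'|] E; first by apply: (via_child s'); rewrite subtree_cat ha /= E.
exists [::]; apply: (paths_subtree ha); rewrite pathsQE.
by have := paths_positions_leaf 0 E; rewrite add0n.
Qed.

Definition contributes t a p v : bool :=
  match subtree t a with
  | Some (PN A _) => v \in A
  | Some (QN secs) => (size a < size p) && (v \in sec secs (nth 0 p (size a)))
  | None => false
  end.

Lemma contributesPE A ch i a i' p v : contributes (PN A ch) (i :: a) (i' :: p) v =
  if onth ch i is Some s then contributes s a p v else false.
Proof. by rewrite /contributes /=; case: (onth ch i). Qed.

Lemma contributesQE secs i a i' p v : contributes (QN secs) (i :: a) (i' :: p) v =
  if onth secs i is Some (_, Some s) then contributes s a p v else false.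
Proof. by rewrite /contributes /=; case: (onth secs i) => [[B [s|]]|]. Qed.

Lemma sec_onth (secs : seq ({set T} * option (mpq T))) i B o :
  onth secs i = Some (B, o) -> sec secs i = B.
Proof.
move=> E; rewrite /sec (nth_map (set0, None)) ?(onth_nth _ _ _ _ E) //.
by rewrite -onthTE E.
Qed.

Lemma sec_onth_none (secs : seq ({set T} * option (mpq T))) i :
  onth secs i = None -> sec secs i = set0.
Proof. by move=> E; rewrite /sec nth_default // size_map -onthNE E. Qed.

Lemma sec_has (secs : seq ({set T} * option (mpq T))) i v :
  v \in sec secs i -> has (fun pos : {set T} * option (mpq T) => v \in pos.1) secs.
Proof.
rewrite /sec; elim: secs i => [|pos secs IH] [|i] /=; rewrite ?nth_nil ?inE //.
  by move=> ->.
by move/IH => ->; rewrite orbT.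
Qed.

Lemma contributes_at_node t a p v : contributes t a p v -> at_node t a v.
Proof.
rewrite /contributes /at_node; case: (subtree t a) => [[A ch|secs]|] //.
by case/andP=> _ /sec_has.
Qed.

Lemma contributes_pclique t a p v : prefix a p -> contributes t a p v -> v \in pclique t p.
Proof.
elim: p t a => [|i p IH] [A ch|secs] [|j a] //.
- by rewrite /contributes /= inE => _ ->.
- rewrite prefix_cons contributesPE /= inE => /andP[/eqP-> hp].
  by case: (onth ch i) => [s|] // hs; rewrite (IH _ _ hp hs) orbT.
- rewrite /contributes /= => _; case E: (onth secs i) => [[B [s|]]|];
    rewrite ?(sec_onth E) ?(sec_onth_none E) ?inE //.
  by move=> ->.
- rewrite prefix_cons contributesQE /= => /andP[/eqP-> hp].
  by case: (onth secs i) => [[B [s|]]|] // hs; rewrite inE (IH _ _ hp hs) orbT.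
Qed.

Lemma pclique_contributes t p v :
  v \in pclique t p -> exists2 a, prefix a p & contributes t a p v.
Proof.
elim: p t => [|i p IH] [A ch|secs] /=.
- by exists [::].
- by rewrite inE.
- rewrite inE => /orP[hv|]; first by exists [::]; rewrite ?prefix0s.
  case E: (onth ch i) => [s|]; last by rewrite inE.
  by case/IH => a ha hs; exists (i :: a); rewrite /= ?eqxx ?contributesPE ?E.
case E: (onth secs i) => [[B [s|]]|]; last by rewrite inE.
  rewrite inE => /orP[hv|].
    by exists [::]; rewrite ?prefix0s // /contributes /= (sec_onth E) hv.
  by case/IH => a ha hs; exists (i :: a); rewrite /= ?eqxx ?contributesQE ?E.
by move=> hv; exists [::]; rewrite ?prefix0s // /contributes /= (sec_onth E) hv.
Qed.

Lemma contributes_transfer t a p p' v : contributes t a p v -> size a < size p' ->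
  nth 0 p' (size a) = nth 0 p (size a) -> contributes t a p' v.
Proof.
rewrite /contributes; case: (subtree t a) => [[A ch|secs]|] // /andP[_ hv] hs E.
by rewrite hs E hv.
Qed.

Lemma P_node_in_cliques_below t a A ch p v : subtree t a = Some (PN A ch) ->
  v \in A -> prefix a p -> v \in pclique t p.
Proof. by move=> ha hv hp; apply: (contributes_pclique hp); rewrite /contributes ha. Qed.

Lemma private_vertex_node t a i i' q q' u :
  u \in pclique t (a ++ i :: q) -> u \notin pclique t (a ++ i' :: q') ->
  exists b, at_node t b u /\ (prefix (rcons a i) b \/
    (b = a /\ exists secs, [/\ subtree t a = Some (QN secs),
                               u \in sec secs i & u \notin sec secs i'])).
Proof.
move=> /pclique_contributes [b hb hu] hu'; exists b; split; first exact: contributes_at_node hu.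
have Eb : b = take (size b) (a ++ i :: q) by move: hb; rewrite prefixE => /eqP.
case: (ltnP (size a) (size b)) => hab.
  left; rewrite prefixE size_rcons Eb take_takel // take_cat ltnNge leqnSn /=.
  by rewrite subSnn take_cons take0 cats1.
have Eba : b = take (size b) a by rewrite {1}Eb takel_cat.
have hb' : prefix b (a ++ i' :: q').
  by rewrite Eba; apply: prefix_catl; rewrite prefixE size_take_min (minn_idPl hab).
have hsb : size b < size (a ++ i' :: q').
  by rewrite size_cat /= addnS ltnS (leq_trans hab) ?leq_addr.
case: (ltngtP (size b) (size a)) hab => // [hlt|heq] _.
  case/negP: hu'; apply: (contributes_pclique hb'); apply: (contributes_transfer hu hsb).
  by rewrite !nth_cat hlt.
have Eab : b = a by rewrite Eba heq take_size.
subst b; clear Eb Eba.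
right; split=> //; move: hu hu'; rewrite /contributes; case E: (subtree t a) => [[A ch|secs]|] //.
  by move=> hA; case/negP; apply: (contributes_pclique hb'); rewrite /contributes E.
case/andP => _; rewrite nth_cat ltnn subnn /= => hi hu'; exists secs; split=> //.
apply: contra hu' => hi'; apply: (contributes_pclique hb').
by rewrite /contributes E hsb nth_cat ltnn subnn.
Qed.

End Paths.

Section Graphs.
Variables (T : finType) (e : rel T).

Lemma clique_edge K u w : is_clique e K -> u \in K -> w \in K -> u != w -> e u w.
Proof.
move=> /forallP/(_ u)/implyP hK hu hw huw.
by move: (hK hu) => /forallP/(_ w)/implyP/(_ hw)/implyP/(_ huw).
Qed.

(** Every clique extends to a maximal clique (take one of maximum size). *)
Lemma maximal_clique_ext S : is_clique e S -> exists K, maximal_clique e K /\ S \subset K.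
Proof.
move=> cS; pose P K := is_clique e K && (S \subset K).
have [K /andP[cK SK] Kmax] := @arg_maxnP _ S P (fun K => #|K|) (introT andP (conj cS (subxx S))).
exists K; split=> //; split=> // K' cK' KK'.
have /Kmax hK' : P K' by rewrite /P cK' (subset_trans SK KK').
by apply/eqP; rewrite eq_sym eqEcard KK'.
Qed.

Lemma edge_clique u w : symmetric e -> e u w -> is_clique e [set u; w].
Proof.
move=> sym_e euw; apply/forallP => a; apply/implyP; rewrite !inE => ha.
apply/forallP => b; apply/implyP; rewrite !inE => hb.
by case/orP: ha => /eqP ->; case/orP: hb => /eqP ->;
  rewrite ?eqxx ?euw ?implybT // sym_e euw implybT.
Qed.

Lemma remove_edge_keep x y a b : e a b ->
  (a != x) || (b != y) -> (a != y) || (b != x) -> remove_edge e x y a b.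
Proof. by rewrite /remove_edge => -> h1 h2 /=; rewrite negb_or !negb_and h1 h2. Qed.

End Graphs.

(** An interval graph has no induced 4-cycle x - u - y - w - x: the intervals
    of x and y are disjoint, and then those of u and w must both cover the gap
    between them, so they meet. *)
Lemma interval_graph_no_C4 (T : finType) (e : rel T) x u y w : interval_graph e ->
  x != u -> u != y -> y != w -> w != x -> u != w -> x != y ->
  e x u -> e u y -> e y w -> e w x -> ~~ e x y -> ~~ e u w -> False.
Proof.
case=> I [hI he] n1 n2 n3 n4 n5 n6.
rewrite !he // 1?eq_sym //.
move=> /andP[a1 a2] /andP[b1 b2] /andP[c1 c2] /andP[d1 d2].
rewrite !negb_and -!ltnNge => /orP[f|f] /orP[g|g];
have := hI x; have := hI u; have := hI y; have := hI w; lia.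
Qed.

Section MPQTreeOfGraph.
Variables (T : finType) (e : rel T) (t : mpq T).
Hypothesis sym_e : symmetric e.
Hypothesis tree : mpq_tree_of e t.

Lemma wf_t : mpq_wf t. Proof. by case: tree. Qed.
Lemma node_unique v : exists! a, at_node t a v. Proof. by case: tree. Qed.
Lemma uniq_cliques : uniq (cliques t). Proof. by case: tree => _ _ _ []. Qed.
Lemma cliques_maximal K : K \in cliques t <-> maximal_clique e K.
Proof. by case: tree => _ _ _ []. Qed.

Lemma at_node_inj a b v : at_node t a v -> at_node t b v -> a = b.
Proof. by move=> ha hb; have [a0 [_ h]] := node_unique v; rewrite -(h a ha) -(h b hb). Qed.

Lemma pclique_below_node a p v : at_node t a v -> v \in pclique t p -> prefix a p.
Proof.
by move=> ha /pclique_contributes [b bp /contributes_at_node hb]; rewrite (at_node_inj ha hb).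
Qed.

Lemma path_clique_maximal p : p \in paths t -> maximal_clique e (pclique t p).
Proof. by move=> hp; apply/cliques_maximal; rewrite cliques_paths map_f. Qed.

Lemma edge_path_clique u w : e u w ->
  exists2 p, p \in paths t & (u \in pclique t p) && (w \in pclique t p).
Proof.
move=> euw; have [K [/cliques_maximal]] := maximal_clique_ext (edge_clique sym_e euw).
rewrite cliques_paths => /mapP [p hp ->] /subsetP uwK.
by exists p => //; rewrite !uwK // !inE eqxx ?orbT.
Qed.

(** Distinct paths have distinct maximal cliques, hence each has a vertex
    missing from the other. *)
Lemma private_vertex p0 p1 : p0 \in paths t -> p1 \in paths t -> p0 != p1 ->
  exists2 u, u \in pclique t p0 & u \notin pclique t p1.
Proof.
move=> hp0 hp1 np; have [sub|/subsetPn //] := boolP (pclique t p0 \subset pclique t p1).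
have E := (path_clique_maximal hp0).2 _ (path_clique_maximal hp1).1 sub.
by case/eqP: np; apply: (uniq_map_inj _ hp0 hp1 (esym E)); rewrite -cliques_paths uniq_cliques.
Qed.

(** A vertex assigned strictly above the node [c] that lies in one clique
    through [c] lies in all of them: its node is on every such path, and all
    of them choose the same position there. *)
Lemma above_in_all_cliques_below a c p0 p v : at_node t a v -> size a < size c ->
  prefix c p0 -> prefix c p -> v \in pclique t p0 -> v \in pclique t p.
Proof.
move=> hv ac /prefixP[r0 ->] /prefixP[r ->] /pclique_contributes [b bp hb].
have {b bp hb}[ap hb] : prefix a (c ++ r0) /\ contributes t a (c ++ r0) v.
  by rewrite (at_node_inj hv (contributes_at_node hb)).
have ac' : prefix a c by move: ap; rewrite !prefixE takel_cat // ltnW.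
apply: (contributes_pclique (prefix_catl r ac')); apply: (contributes_transfer hb).
  by rewrite size_cat (leq_trans ac) ?leq_addr.
by rewrite !nth_cat ac.
Qed.

Definition branch_vertex c i u p : Prop :=
  [/\ p \in paths t, u \in pclique t p & exists2 a, at_node t a u & prefix (rcons c i) a].

Definition two_branch_vertices c : Prop :=
  exists i j, [/\ i != j, exists u p, branch_vertex c i u p & exists w p, branch_vertex c j w p].

Lemma branch_vertex_deep c i u p : branch_vertex c i u p ->
  prefix c p /\ exists2 a, at_node t a u & size c < size a.
Proof.
move=> [_ up [a ha ia]]; split; last by exists a => //; move/size_prefix: ia; rewrite size_rcons.
exact: prefix_trans (prefix_trans (prefix_rcons c i) ia) (pclique_below_node ha up).
Qed.

(** A private vertex of a path through branch [i] against a path through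
    branch [i'] lies below branch [i], unless it sits in the [i]-th section of
    a Q-node at [c] and not in the [i']-th; that is ruled out when that section
    is contained in the [i']-th. *)
Lemma branch_vertex_exists c s i i' : subtree t c = Some s -> i != i' ->
  i < arity s -> i' < arity s ->
  (forall secs, s = QN secs -> sec secs i \subset sec secs i') ->
  exists u p, branch_vertex c i u p.
Proof.
move=> hs nii' hi hi' sub.
have [q hq] := path_through_child wf_t hs hi.
have [q' hq'] := path_through_child wf_t hs hi'.
have [u hu hu'] := private_vertex hq hq' (branch_paths_neq c q q' nii').
exists u, (c ++ i :: q); split=> //.
have [b [hb [below|[_ [secs [hsecs ui ui']]]]]] := private_vertex_node hu hu'.
  by exists b.
move: hs; rewrite hsecs => -[/esym/sub/subsetP/(_ u ui)].
by rewrite (negbTE ui').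
Qed.

(** Vertices below different branches of a node are distinct and not
    adjacent: no clique reaches into two branches. *)
Lemma branch_vertices_apart c i j u w pu pw : i != j ->
  branch_vertex c i u pu -> branch_vertex c j w pw -> u != w /\ ~~ e u w.
Proof.
move=> nij [_ _ [au hu iau]] [_ _ [aw hw jaw]].
have apart p : prefix au p -> prefix aw p -> False.
  move=> aup awp; move/eqP: nij; apply.
  exact: prefix_rcons_eq (prefix_trans iau aup) (prefix_trans jaw awp).
split.
  by apply/eqP=> Euw; subst w; apply: (apart au); rewrite ?(at_node_inj hw hu) prefix_refl.
apply/negP => /edge_path_clique [p _ /andP[up wp]].
exact: apart (pclique_below_node hu up) (pclique_below_node hw wp).
Qed.

Lemma P_node_two_branches c A ch : subtree t c = Some (PN A ch) -> 1 < size ch ->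
  two_branch_vertices c.
Proof.
move=> hc hch; exists 0, 1; split=> //.
- by apply: (branch_vertex_exists (i' := 1) hc) => //; exact: ltnW.
- by apply: (branch_vertex_exists (i' := 0) hc) => //; exact: ltnW.
Qed.

(** A Q-node branches at its first and last positions, by (b):
    S_1 is contained in S_2 and S_k in S_{k-1}. *)
Lemma Q_node_two_branches c secs : subtree t c = Some (QN secs) -> two_branch_vertices c.
Proof.
move=> hc; have := wf_subtree wf_t hc; rewrite wfQE => -[[k3 [_ [sub01 sublast]] _ _ _] _].
exists 0, (size secs).-1; split.
- by apply/eqP; lia.
- by apply: (branch_vertex_exists (i' := 1) hc) => //=; [lia | lia | move=> ? [<-]].
- by apply: (branch_vertex_exists (i' := (size secs).-2) hc) => //=;
    [apply/eqP; lia | lia | lia | move=> ? [<-]].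
Qed.

(** Below a P-node that is not a leaf there is a node with vertices below two
    different branches: the P-node itself if it has two children, and
    otherwise its only child, which is a Q-node by (h). *)
Lemma nonleaf_P_node_branches a A ch : subtree t a = Some (PN A ch) -> ch <> [::] ->
  exists2 c, prefix a c & two_branch_vertices c.
Proof.
case: ch => [//|s [|s1 ch]] ha _; last first.
  by exists a; [exact: prefix_refl | exact: P_node_two_branches ha _].
have := wf_subtree wf_t ha; rewrite wfPE => -[[_ not_single_P] _].
case: s ha not_single_P => [B chB|secs] ha not_single_P; first by exfalso; apply: not_single_P.
exists (a ++ [:: 0]); first exact: prefix_prefix.
by apply: Q_node_two_branches; rewrite subtree_cat ha.
Qed.

(** Let x, y be adjacent vertices assigned at or above [c]
    and lying in every clique through [c], and let u, w lie below two different
    branches of [c].  Then x - u - y - w - x is a 4-cycle whose chord uw is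
    missing; once the edge xy is removed as well it is an induced 4-cycle. *)
Lemma two_branches_not_interval x y ax ay c : e x y -> x != y ->
  at_node t ax x -> at_node t ay y -> size ax <= size c -> size ay <= size c ->
  (forall p, prefix c p -> (x \in pclique t p) && (y \in pclique t p)) ->
  two_branch_vertices c -> ~ interval_graph (remove_edge e x y).
Proof.
move=> exy nxy hx hy xc yc xy_below [i [j [nij [u [pu bu]] [w [pw bw]]]]] ig.
have [nuw neuw] := branch_vertices_apart nij bu bw.
have [cpu [au hu cau]] := branch_vertex_deep bu.
have [cpw [aw hw caw]] := branch_vertex_deep bw.
have fresh z v az av : at_node t az z -> size c < size az ->
    at_node t av v -> size av <= size c -> z != v.
  move=> hz caz hv avc; apply/eqP => Ezv; subst z.
  by move: caz; rewrite (at_node_inj hz hv) ltnNge avc.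
have ux := fresh _ _ _ _ hu cau hx xc; have uy := fresh _ _ _ _ hu cau hy yc.
have wx := fresh _ _ _ _ hw caw hx xc; have wy := fresh _ _ _ _ hw caw hy yc.
case: bu bw => hpu upu _ [hpw wpw _].
have [cu _] := path_clique_maximal hpu; have [cw _] := path_clique_maximal hpw.
case/andP: (xy_below _ cpu) => xpu ypu; case/andP: (xy_below _ cpw) => xpw ypw.
apply: (interval_graph_no_C4 ig (x := x) (u := u) (y := y) (w := w)) => //.
- by rewrite eq_sym.
- by rewrite eq_sym.
- apply: remove_edge_keep; first by apply: clique_edge cu xpu upu _; rewrite eq_sym.
    by rewrite uy orbT.
  by rewrite nxy.
- by apply: remove_edge_keep; [exact: clique_edge cu upu ypu uy | rewrite ux | rewrite uy].
- apply: remove_edge_keep; first by apply: clique_edge cw ypw wpw _; rewrite eq_sym.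
    by rewrite eq_sym nxy.
  by rewrite wx orbT.
- by apply: remove_edge_keep; [exact: clique_edge cw wpw xpw wx | rewrite wx | rewrite wy].
- by rewrite /remove_edge !eqxx /= andbF.
- by rewrite /remove_edge negb_and neuw.
Qed.

End MPQTreeOfGraph.

Theorem mainTheorem10 (T : finType) (e : rel T) (t : mpq T) (x y : T)
    (ax ay : seq nat) (Sy : {set T}) (chy : seq (mpq T)) :
  symmetric e -> irreflexive e -> interval_graph e -> mpq_tree_of e t ->
  e x y ->
  at_node t ax x -> at_node t ay y ->   (* ax = node(x), ay = node(y) *)
  prefix ax ay ->                      (* x is over y *)
  ax <> ay ->                          (* node(x) <> node(y) *)
  subtree t ay = Some (PN Sy chy) ->   (* node(y) is a P-node ... *)
  chy <> [::] ->                       (* ... that is not a leaf *)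
  ~ interval_graph (remove_edge e x y).
Proof.
move=> sym_e irr_e _ tree exy hx hy ax_ay nxy hay not_leaf.
have y_Sy : y \in Sy by move: hy; rewrite /at_node hay.
have ax_lt : size ax < size ay.
  rewrite ltn_neqAle size_prefix // andbT; apply/eqP => Es; apply: nxy.
  by move: ax_ay; rewrite prefixE Es take_size => /eqP.
have [p0 _ /andP[xp0 yp0]] := edge_path_clique sym_e tree exy.
have ay_p0 := pclique_below_node tree hy yp0.
have [c ay_c branches] := nonleaf_P_node_branches tree hay not_leaf.
have ay_c_size := size_prefix ay_c.
apply: (two_branches_not_interval sym_e tree exy _ hx hy _ ay_c_size _ branches).
- by apply: contraTneq exy => ->; rewrite irr_e.
- exact: ltnW (leq_trans ax_lt ay_c_size).
move=> p c_p; have ay_p := prefix_trans ay_c c_p.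
rewrite (P_node_in_cliques_below hay y_Sy ay_p) andbT.
exact: (above_in_all_cliques_below tree hx ax_lt ay_p0 ay_p xp0).
Qed.
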